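(* Assume that for every $t$ the local noises $w^1_t,\ldots,w^n_t$ are exchangeable. For any realization $x_{1:t},y_{1:t},a_{1:t}$, $t\in\mathbb{N}$, and irrespective of the strategy $g$, $$\mathbb{E}\big[c(m_t,\hat m_t,a_t)\mid x_{1:t},y_{1:t},a_{1:t}\big]=\hat c(x_t,y_t,a_t):=\sum_{m\in\mathcal{M}(n)}c\big(m,h(T_{\mathsf m}^{y_t}(\cdot,x_t)),a_t\big)\,T_{\mathsf m}^{y_t}(m,x_t).$$
   Context: Setting: $n$ nodes with states $s^i_t$ in a finite set $\mathcal{S}\subset\mathbb{R}$, time $t\in\mathbb{N}$; empirical distribution $m_t(s)=\frac1n\sum_i\mathbb{1}\{s^i_t=s\}\in\mathcal{M}(n)$ (probability vectors on $\mathcal{S}$ with entries in $\{0,\frac1n,\ldots,1\}$); dynamics $s^i_{t+1}=f(s^i_t,m_t,w^i_t)$ with local noise $w^i_t$ in a finite set $\mathcal{W}$. Action $a_t\in\{0,1\}$. Observations $o_t\in\mathcal{M}(n)\cup\{\mathtt{blank}\}$: $o_1=m_1$; if $a_t=0$ then $o_{t+1}=\mathtt{blank}$; if $a_t=1$ then $o_{t+1}=m_{t+1}$ with probability $q\in[0,1]$, else $\mathtt{blank}$. Strategy $a_t=g_t(o_{1:t},a_{1:t-1})$. Primitive random variables are mutually independent. Estimate $\hat m_t=h(\mathbb{P}(m_t\mid o_{1:t},a_{1:t-1}))\in\mathcal{M}(n)$ for a fixed function $h$ on probability distributions over $\mathcal{M}(n)$. Per-step cost $c:\mathcal{M}(n)^2\times\{0,1\}\to\mathbb{R}_{\ge0}$.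 $T_{\mathsf m}(m',m)=\mathbb{P}(m_{t+1}=m'\mid m_t=m)$ is the transition matrix of the Markov chain $m_t$, $T_{\mathsf m}^y$ its $y$-th power. $x_t$ is the last non-blank observation up to $t$ and $y_t$ the number of blanks since, $(x_1,y_1)=(m_1,0)$. *)

From HB Require Import structures.
From mathcomp Require Import all_boot all_order all_algebra.
Set Implicit Arguments. Unset Strict Implicit. Unset Printing Implicit Defensive.
Import Order.TTheory GRing.Theory Num.Theory.

(* ---------- empirical distributions M(n), encoded by count vectors n*m ---------- *)
Definition Mn (S : finType) (n : nat) : predArgType :=
  {k : {ffun S -> 'I_n.+1} | \sum_(s : S) (k s : nat) == n}.

Definition counts (S : finType) (n : nat) (st : {ffun 'I_n -> S}) : {ffun S -> 'I_n.+1} :=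
  [ffun x => inord #|[pred i | st i == x]|].

Lemma counts_sum (S : finType) (n : nat) (st : {ffun 'I_n -> S}) :
  \sum_(s : S) (counts st s : nat) == n.
Proof.
apply/eqP.
transitivity (\sum_(s : S) \sum_(i : 'I_n) (st i == s : nat)).
  apply: eq_bigr => s _; rewrite ffunE inordK; last first.
    by rewrite ltnS -[X in (_ <= X)%N]card_ord max_card.
  by rewrite -sum1_card big_mkcond /=.
rewrite exchange_big /= -[RHS]card_ord -sum1_card; apply: eq_bigr => i _.
by rewrite (bigD1 (st i)) //= eqxx big1 ?addn0 // => s /negPf; rewrite eq_sym => ->.
Qed.

Definition emp (S : finType) (n : nat) (st : {ffun 'I_n -> S}) : Mn S n :=
  exist _ (counts st) (counts_sum st).

Local Open Scope ring_scope.
Fixpoint Tpow (R : ringType) (M : finType) (T : M -> M -> R) (y : nat) : M -> M -> R :=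
  match y with
  | 0 => fun m' m => (m' == m)%:R
  | y'.+1 => fun m' m => \sum_(m'' : M) T m' m'' * Tpow T y' m'' m
  end.

Section Model.
Variables (R : realFieldType) (S W : finType) (n : nat).
Variable f : S -> Mn S n -> W -> S.
Variables (P0 : {ffun 'I_n -> S} -> R)
          (Pw : {ffun 'I_n -> W} -> R)
          (q : R).                                        (* success prob. of a requested observation *)

(* sample space up to horizon N: initial states, noise vectors w_0..w_{N-1},
   Bernoulli(q) coins deciding whether o_{t+1} is delivered, for t = 0..N-1 *)
Local Open Scope ring_scope.
Definition Omega (N : nat) : finType :=
  ({ffun 'I_n -> S} * {ffun 'I_N -> {ffun 'I_n -> W}} * {ffun 'I_N -> bool})%type.

Definition prob N (w : Omega N) : R :=
  P0 w.1.1 * (\prod_(j : 'I_N) Pw (w.1.2 j)) * \prod_(j : 'I_N) (if w.2 j then q else 1 - q).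

Definition Pr N (A : pred (Omega N)) : R := \sum_(w | A w) prob w.

Definition CE N (X : Omega N -> R) (A : pred (Omega N)) : R :=
  (\sum_(w | A w) prob w * X w) / Pr A.

(* node states s_k (0-based time: k = paper's t - 1) *)
Local Open Scope nat_scope.
Fixpoint st N (w : Omega N) (k : nat) : {ffun 'I_n -> S} :=
  match k with
  | 0 => w.1.1
  | k'.+1 => let p := st w k' in
      if (insub k' : option 'I_N) is Some j
      then [ffun i => f (p i) (emp p) (w.1.2 j i)] else p
  end.

Definition mt N (w : Omega N) k : Mn S n := emp (st w k).

Variable g : nat -> seq (option (Mn S n)) -> seq bool -> bool.

(* history (o_0..o_k, a_0..a_{k-1}); None = blank *)
Fixpoint hist N (w : Omega N) (k : nat) : seq (option (Mn S n)) * seq bool :=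
  match k with
  | 0 => ([:: Some (mt w 0)], [::])
  | k'.+1 => let (os, as_) := hist w k' in
      let a := g k' os as_ in
      let coin := if (insub k' : option 'I_N) is Some j then w.2 j else false in
      (rcons os (if a && coin then Some (mt w k'.+1) else None), rcons as_ a)
  end.

Definition act_at N (w : Omega N) k : bool := g k (hist w k).1 (hist w k).2.

Definition xy_step (p : Mn S n * nat) (o : option (Mn S n)) : Mn S n * nat :=
  if o is Some m then (m, 0%N) else (p.1, p.2.+1).

(* (x_k, y_k): last non-blank observation and number of blanks since *)
Definition xy_at N (w : Omega N) k : Mn S n * nat :=
  foldl xy_step (mt w 0, 0%N) (hist w k).1.

Definition xseq N (w : Omega N) k := [seq (xy_at w j).1 | j <- iota 0 k.+1].
Definition yseq N (w : Omega N) k := [seq (xy_at w j).2 | j <- iota 0 k.+1].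
Definition aseq N (w : Omega N) k := [seq act_at w j | j <- iota 0 k.+1].

Definition belief N (w : Omega N) k : {ffun Mn S n -> R} :=
  [ffun m => Pr [pred w' : Omega N | (mt w' k == m) && (hist w' k == hist w k)]
             / Pr [pred w' : Omega N | hist w' k == hist w k]].

Definition mhat (h : {ffun Mn S n -> R} -> Mn S n) N (w : Omega N) k : Mn S n :=
  h (belief w k).
End Model.

Definition chat (R : ringType) (S : finType) (n : nat)
  (c : Mn S n -> Mn S n -> bool -> R) (h : {ffun Mn S n -> R} -> Mn S n)
  (T : Mn S n -> Mn S n -> R) (x : Mn S n) (y : nat) (a : bool) : R :=
  \sum_(m : Mn S n) c m (h [ffun m' => Tpow T y m' x]) a * Tpow T y m x.

(* Write H_k for the history (o_{0:k}, a_{0:k-1}).  The heart of the proof is that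
   P(m_k = . | H_k) = T^{y_k}(., x_k), by induction on k.  A delivered observation pins
   m_{k+1} down.  A blank one is caused by the action and the coin, which is independent of
   everything else, and the fresh noise w_k is independent of the past, so the law is pushed
   forward by one step of the chain; exchangeability of the noise makes the one-step law of
   m_{k+1} depend on the configuration s_k only through m_k, i.e. equal to T.  Finally the
   sequences (x, y, a) determine H_k and conversely, so conditioning on them is conditioning on
   H_k, under which the estimate and the action are fixed and m_k has law T^{y_k}(., x_k). *)

From Pilot Require Import Defs.
From HB Require Import structures.
From mathcomp Require Import all_boot all_order all_algebra all_fingroup.
From mathcomp Require Import ring.
Import Order.TTheory GRing.Theory Num.Theory.
Local Open Scope ring_scope.

Lemma TpowS (R : nzRingType) (M : finType) (T : M -> M -> R) y m' m :
  Tpow T y.+1 m' m = \sum_m'' T m' m'' * Tpow T y m'' m.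
Proof. by []. Qed.

Section CoordinateUpdate.
Local Set Implicit Arguments. Local Unset Strict Implicit.
Variables (I X : finType) (k : I).
Implicit Types (u : {ffun I -> X}) (x : X).

Definition fupd (u : {ffun I -> X}) (x : X) : {ffun I -> X} :=
  [ffun i => if i == k then x else u i].

Lemma fupd_at u x : fupd u x k = x.
Proof. by rewrite ffunE eqxx. Qed.

Lemma fupd_fupd u x y : fupd (fupd u x) y = fupd u y.
Proof. by apply/ffunP => i; rewrite !ffunE; case: (i == k). Qed.

Lemma fupd_id u : fupd u (u k) = u.
Proof. by apply/ffunP => i; rewrite ffunE; case: eqP => // ->. Qed.

Lemma fupd_swap u x : (fupd (fupd u x) (u k), fupd u x k) = (u, x).
Proof. by rewrite fupd_fupd fupd_id fupd_at. Qed.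

Lemma fupd_swapK : involutive (fun ux : {ffun I -> X} * X => (fupd ux.1 ux.2, ux.1 k)).
Proof. by case=> u x; exact: fupd_swap. Qed.

Lemma prod_fupd (R : comPzSemiRingType) (p : X -> R) u x :
  p (u k) * \prod_i p (fupd u x i) = p x * \prod_i p (u i).
Proof.
rewrite (bigD1 k) //= [in RHS](bigD1 k) //= fupd_at mulrCA; congr (_ * (_ * _)).
by apply: eq_bigr => i /negPf ik; rewrite ffunE ik.
Qed.

(* The swap [(u, x) |-> (fupd u x, u k)] is an involution of [{ffun I -> X} * X]
   that preserves the product weight [p x * \prod_i p (u i)]. *)
Lemma sum_prod_marginal (R : comPzSemiRingType) (p : X -> R) (G : {ffun I -> X} -> X -> R) :
  \sum_x p x = 1 -> (forall u x, G (fupd u x) =1 G u) ->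
  \sum_(u : {ffun I -> X}) (\prod_i p (u i)) * G u (u k) =
  \sum_(u : {ffun I -> X}) (\prod_i p (u i)) * \sum_x p x * G u x.
Proof.
move=> p1 G_fupd; symmetry.
under eq_bigr do rewrite big_distrr /=.
rewrite pair_bigA /= (reindex_inj (inv_inj fupd_swapK)) /=.
under eq_bigr => ux _ do rewrite G_fupd mulrCA mulrA prod_fupd -mulrA.
rewrite -(pair_bigA _ (fun u x => p x * ((\prod_i p (u i)) * G u (u k)))) /=.
by apply: eq_bigr => u _; rewrite -big_distrl /= p1 mul1r.
Qed.

End CoordinateUpdate.

Arguments fupd : simpl never.

Section EmpiricalDistribution.
Local Set Implicit Arguments. Local Unset Strict Implicit.
Variables (S : finType) (n : nat).
Implicit Types s : {ffun 'I_n -> S}.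

Lemma emp_eqE s s' :
  emp s = emp s' <-> forall x, #|[pred i | s i == x]| = #|[pred i | s' i == x]|.
Proof.
have card_lt x s0 : (#|[pred i | s0 i == x]| < n.+1)%N.
  by rewrite ltnS -[X in (_ <= X)%N]card_ord max_card.
split=> [E x | E].
  move/(congr1 (fun m : Mn S n => val (val m x))): E.
  by rewrite /= !ffunE !inordK ?card_lt.
by apply: val_inj; apply/ffunP => x; rewrite /= !ffunE E.
Qed.

Lemma emp_perm s (sigma : 'S_n) : emp [ffun i => s (sigma i)] = emp s.
Proof.
apply/emp_eqE => x; rewrite -!sum1_card [RHS](reindex_inj (@perm_inj _ sigma)) /=.
by apply: eq_bigl => i; rewrite !inE ffunE.
Qed.

Lemma emp_permP s s' : emp s = emp s' -> exists sigma : 'S_n, s' = [ffun i => s (sigma i)].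
Proof.
move/emp_eqE => E.
have count_tuple s0 x : count_mem x [tuple s0 i | i < n] = #|[pred i | s0 i == x]|.
  rewrite /= count_map cardE /enum_mem size_filter count_filter.
  by apply: eq_count => i /=; rewrite andbT.
have /tuple_permP [sigma s's] : perm_eq [tuple s' i | i < n] [tuple s i | i < n].
  by apply/allP => x _ /=; rewrite !count_tuple E.
exists sigma; apply/ffunP => i.
by have := congr1 (fun t : n.-tuple S => tnth t i) (val_inj s's); rewrite !tnth_mktuple ffunE.
Qed.

End EmpiricalDistribution.

Section Model.
Local Set Implicit Arguments. Local Unset Strict Implicit.
Variables (R : realFieldType) (S W : finType) (n : nat) (f : S -> Mn S n -> W -> S).
Variables (P0 : {ffun 'I_n -> S} -> R) (Pw : {ffun 'I_n -> W} -> R) (q : R) (N : nat).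
Variable g : nat -> seq (option (Mn S n)) -> seq bool -> bool.

Local Notation O := (Omega S W n N).
Local Notation prob := (prob P0 Pw q (N:=N)).
Local Notation Pr := (Pr P0 Pw q (N:=N)).
Local Notation st := (st f (N:=N)).
Local Notation mt := (mt f (N:=N)).
Local Notation hist := (hist f g (N:=N)).
Local Notation act_at := (act_at f g (N:=N)).
Local Notation xy_at := (xy_at f g (N:=N)).

Definition upd_noise (w : O) (j : 'I_N) (v : {ffun 'I_n -> W}) : O :=
  ((w.1.1, fupd j w.1.2 v), w.2).
Definition upd_coin (w : O) (j : 'I_N) (b : bool) : O := (w.1, fupd j w.2 b).

Lemma sum_Omega (F : O -> R) :
  \sum_w F w = \sum_(s : {ffun 'I_n -> S}) \sum_(v : {ffun 'I_N -> {ffun 'I_n -> W}})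
                 \sum_(c : {ffun 'I_N -> bool}) F ((s, v), c).
Proof. by rewrite pair_bigA pair_bigA; apply: eq_bigr => -[[s v] c]. Qed.

Lemma sum_prob_noise (j : 'I_N) (G : O -> {ffun 'I_n -> W} -> R) :
  \sum_v Pw v = 1 -> (forall w v, G (upd_noise w j v) =1 G w) ->
  \sum_w prob w * G w (w.1.2 j) = \sum_w prob w * \sum_v Pw v * G w v.
Proof.
move=> Pw1 G_upd; rewrite !sum_Omega; apply: eq_bigr => s _.
rewrite exchange_big [RHS]exchange_big; apply: eq_bigr => c _ /=.
pose G' v x := P0 s * (\prod_i (if c i then q else 1 - q)) * G ((s, v), c) x.
transitivity (\sum_(v : {ffun 'I_N -> _}) (\prod_i Pw (v i)) * G' v (v j)).
  by apply: eq_bigr => v _; rewrite /Defs.prob /G' /=; ring.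
rewrite (sum_prod_marginal (k := j)) //; last by move=> v z x; rewrite /G' (G_upd ((s, v), c)).
apply: eq_bigr => v _; rewrite /Defs.prob /G' /= !big_distrr /=.
by apply: eq_bigr => x _; ring.
Qed.

Lemma sum_prob_coin (j : 'I_N) (G : O -> bool -> R) :
  (forall w b, G (upd_coin w j b) =1 G w) ->
  \sum_w prob w * G w (w.2 j) = \sum_w prob w * \sum_b (if b then q else 1 - q) * G w b.
Proof.
move=> G_upd; rewrite !sum_Omega; apply: eq_bigr => s _; apply: eq_bigr => v _.
pose G' c x := P0 s * (\prod_i Pw (v i)) * G ((s, v), c) x.
transitivity (\sum_(c : {ffun 'I_N -> bool}) (\prod_i (if c i then q else 1 - q)) * G' c (c j)).
  by apply: eq_bigr => c _; rewrite /Defs.prob /G' /=; ring.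
rewrite (sum_prod_marginal (k := j) (p := fun b => if b then q else 1 - q)).
- apply: eq_bigr => c _; rewrite /Defs.prob /G' /= !big_distrr /=.
  by apply: eq_bigr => x _; ring.
- by rewrite big_bool /=; ring.
- by move=> c z x; rewrite /G' (G_upd ((s, v), c)).
Qed.

Lemma st_upd_noise w (j : 'I_N) v i : (i <= j)%N -> st (upd_noise w j v) i = st w i.
Proof.
elim: i => [//|i IH] lt_ij /=; rewrite IH ?(ltnW lt_ij) //.
case: insubP => [j' _ ej|] //=; apply/ffunP => r; rewrite !ffunE ifN //.
by apply: contraTneq lt_ij => j'j; rewrite -ej j'j ltnn.
Qed.

Lemma st_upd_coin w j b i : st (upd_coin w j b) i = st w i.
Proof. by elim: i => //= i ->. Qed.

Definition coin (w : O) i : bool := if insub i : option 'I_N is Some j then w.2 j else false.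

Definition obs (w : O) i : option (Mn S n) :=
  if act_at w i && coin w i then Some (mt w i.+1) else None.

Lemma coin_ord w (j : 'I_N) : coin w j = w.2 j.
Proof. by rewrite /coin valK. Qed.

Lemma hist_succ w i :
  hist w i.+1 = (rcons (hist w i).1 (obs w i), rcons (hist w i).2 (act_at w i)).
Proof. by rewrite /= /obs /Defs.act_at /coin; case: (Defs.hist _ _ _ _). Qed.

Lemma hist_upd_noise w (j : 'I_N) v i : (i <= j)%N -> hist (upd_noise w j v) i = hist w i.
Proof.
elim: i => [|i IH] lt_ij; first by rewrite /= /Defs.mt st_upd_noise.
by rewrite !hist_succ /obs /Defs.act_at IH ?(ltnW lt_ij) // /Defs.mt st_upd_noise.
Qed.

Lemma hist_upd_coin w (j : 'I_N) b i : (i <= j)%N -> hist (upd_coin w j b) i = hist w i.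
Proof.
elim: i => [|i IH] lt_ij; first by rewrite /= /Defs.mt st_upd_coin.
have coin_i : coin (upd_coin w j b) i = coin w i.
  rewrite /coin; case: insubP => [j' _ ej|] //=; rewrite ffunE ifN //.
  by apply: contraTneq lt_ij => j'j; rewrite -ej j'j ltnn.
by rewrite !hist_succ /obs coin_i /Defs.act_at IH ?(ltnW lt_ij) // /Defs.mt st_upd_coin.
Qed.

Lemma eq_hist_succ w w0 i :
  (hist w i.+1 == hist w0 i.+1) = (hist w i == hist w0 i) && (obs w i == obs w0 i).
Proof.
rewrite !hist_succ xpair_eqE !eqseq_rcons.
have [E|ne] := eqVneq (hist w i) (hist w0 i).
  by rewrite /Defs.act_at E !eqxx /= andbT.
rewrite andFb; apply: contraNF ne => /and3P [/andP [/eqP E1 _] /eqP E2 _].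
by apply/eqP; apply: injective_projections.
Qed.

Lemma hist_prefix w w0 i k : (i <= k)%N -> hist w k = hist w0 k -> hist w i = hist w0 i.
Proof.
elim: k => [|k IH]; first by rewrite leqn0 => /eqP ->.
rewrite leq_eqVlt => /predU1P [-> // | lt_ik] /eqP.
by rewrite eq_hist_succ => /andP [/eqP /(IH lt_ik) E _].
Qed.

Lemma mt0_hist w w0 : hist w 0 = hist w0 0 -> mt w 0 = mt w0 0.
Proof. by move/(congr1 (fun h => odflt (mt w 0) (head None h.1))). Qed.

Lemma xy_at_succ w i : xy_at w i.+1 = xy_step (xy_at w i) (obs w i).
Proof. by rewrite /Defs.xy_at hist_succ /= foldl_rcons. Qed.

Lemma obs_xy_at w i :
  obs w i = if (xy_at w i.+1).2 is 0%N then Some (xy_at w i.+1).1 else None.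
Proof. by rewrite xy_at_succ; case: (obs w i). Qed.

Lemma hist_eqE w w0 k : hist w k = hist w0 k <->
  (forall i, (i <= k)%N -> xy_at w i = xy_at w0 i /\ act_at w i = act_at w0 i).
Proof.
split=> [E i le_ik | agree].
  have Ei := hist_prefix le_ik E; split; last by rewrite /Defs.act_at Ei.
  by rewrite /Defs.xy_at Ei (mt0_hist (hist_prefix (leq0n k) E)).
elim: k agree => [|k IH] agree.
  by have [/(congr1 fst) /= m0 _] := agree 0%N (leqnn 0); rewrite /= m0.
rewrite !hist_succ IH => [|i le_ik]; last exact: agree (leqW le_ik).
have [_ Ea] := agree k (leqnSn k); have [Exy _] := agree k.+1 (leqnn _).
by rewrite (obs_xy_at w) (obs_xy_at w0) Exy Ea.
Qed.

Lemma event_hist w w0 k :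
  [&& xseq f g w k == xseq f g w0 k, yseq f g w k == yseq f g w0 k &
      aseq f g w k == aseq f g w0 k] = (hist w k == hist w0 k).
Proof.
have in_iota i : (i \in iota 0 k.+1) = (i <= k)%N by rewrite mem_iota ltnS.
apply/and3P/eqP => [[/eqP Ex /eqP Ey /eqP Ea] | /hist_eqE agree].
  apply/hist_eqE => i le_ik; rewrite -in_iota in le_ik.
  move/eq_in_map: Ex => /(_ i le_ik) Ex; move/eq_in_map: Ey => /(_ i le_ik) Ey.
  by move/eq_in_map: Ea => /(_ i le_ik) Ea; split; first exact: injective_projections.
by split; apply/eqP/eq_in_map => i; rewrite in_iota => /agree [Exy Ea] /=; rewrite ?Exy ?Ea.
Qed.

Lemma PrE (A : pred O) : Pr A = \sum_w prob w * (A w)%:R.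
Proof.
by rewrite /Defs.Pr big_mkcond; apply: eq_bigr => w _; case: (A w); rewrite ?mulr1 ?mulr0.
Qed.

Lemma eq_Pr (A B : pred O) : A =1 B -> Pr A = Pr B.
Proof. exact: eq_bigl. Qed.

Lemma eq_CE (X : O -> R) (A B : pred O) : A =1 B -> CE P0 Pw q X A = CE P0 Pw q X B.
Proof. by move=> eqAB; rewrite /CE (eq_Pr eqAB) (eq_bigl _ _ eqAB). Qed.

Hypothesis P0_ge0 : forall s, 0 <= P0 s.
Hypothesis Pw_ge0 : forall v, 0 <= Pw v.
Hypothesis Pw_sum1 : \sum_v Pw v = 1.
Hypothesis Pw_exch :
  forall (sigma : 'S_n) (v : {ffun 'I_n -> W}), Pw [ffun i => v (sigma i)] = Pw v.
Hypothesis q01 : 0 <= q <= 1.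
Variable T : Mn S n -> Mn S n -> R.
Hypothesis T_trans : forall k (m m' : Mn S n), (k < N)%N ->
  Pr [pred w | (mt w k.+1 == m') && (mt w k == m)] = T m' m * Pr [pred w | mt w k == m].

Lemma prob_ge0 w : 0 <= prob w.
Proof.
have [q_ge0 q_le1] := andP q01.
rewrite /Defs.prob !mulr_ge0 //; apply: prodr_ge0 => j _ //.
by case: (w.2 j); rewrite ?subr_ge0.
Qed.

Lemma Pr_ge_prob (A : pred O) w : A w -> prob w <= Pr A.
Proof.
move=> Aw; rewrite /Defs.Pr (bigD1 w) //= lerDl.
by apply: sumr_ge0 => w' _; apply: prob_ge0.
Qed.

Definition next_law (s : {ffun 'I_n -> S}) (m' : Mn S n) : R :=
  \sum_v Pw v * (emp [ffun i => f (s i) (emp s) (v i)] == m')%:R.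

Lemma next_law_emp s s' m' : emp s = emp s' -> next_law s m' = next_law s' m'.
Proof.
case/emp_permP => sigma ->; rewrite /next_law emp_perm.
pose permute (v : {ffun 'I_n -> W}) := [ffun i => v (sigma i)].
have permuteK : cancel permute (fun v => [ffun i => v ((sigma^-1)%g i)]).
  by move=> v; apply/ffunP => i; rewrite !ffunE permKV.
rewrite [RHS](reindex_inj (can_inj permuteK)) /=; apply: eq_bigr => v _.
rewrite Pw_exch -[in LHS](emp_perm _ sigma); congr (_ * (emp _ == _)%:R).
by apply/ffunP => i; rewrite !ffunE.
Qed.

Lemma Pr_succ_next_law (j : 'I_N) (A : pred O) m' :
  (forall w v, A (upd_noise w j v) = A w) ->
  Pr [pred w | (mt w j.+1 == m') && A w] = \sum_w prob w * (A w)%:R * next_law (st w j) m'.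
Proof.
move=> A_noise; rewrite PrE.
pose G w (v : {ffun 'I_n -> W}) : R := (A w)%:R *
  (emp [ffun i => f (st w j i) (emp (st w j)) (v i)] == m')%:R.
transitivity (\sum_w prob w * G w (w.1.2 j)).
  by apply: eq_bigr => w _; rewrite /G /Defs.mt /= valK -natrM mulnb andbC.
rewrite sum_prob_noise //; last by move=> w v x; rewrite /G A_noise st_upd_noise.
apply: eq_bigr => w _; rewrite /next_law -mulrA; congr (_ * _).
by rewrite big_distrr; apply: eq_bigr => v _; rewrite /G mulrCA.
Qed.

(* [T_trans] at time [j], divided by [Pr (m_j = m) > 0]: [next_law] is constant on
   [m_j = m] by [next_law_emp]. *)
Lemma next_law_T (j : 'I_N) w m' : prob w != 0 -> next_law (st w j) m' = T m' (mt w j).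
Proof.
move=> prob_w; set m := mt w j.
have Pr_m_gt0 : 0 < Pr [pred w' | mt w' j == m].
  apply: lt_le_trans (Pr_ge_prob (A := [pred w' | mt w' j == m]) (eqxx m)).
  by rewrite lt0r prob_w prob_ge0.
apply: (mulIf (lt0r_neq0 Pr_m_gt0)); rewrite -T_trans //.
rewrite Pr_succ_next_law; last by move=> w' v; rewrite /Defs.mt st_upd_noise.
rewrite PrE big_distrr /=; apply: eq_bigr => w' _ /=.
have [Em|] := eqVneq (mt w' j) m; last by rewrite !mulr0 mul0r.
by rewrite (next_law_emp _ Em) mulrC.
Qed.

Lemma Pr_mt_succ (j : 'I_N) (A : pred O) m' :
  (forall w v, A (upd_noise w j v) = A w) ->
  Pr [pred w | (mt w j.+1 == m') && A w] = \sum_m T m' m * Pr [pred w | (mt w j == m) && A w].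
Proof.
move=> A_noise; rewrite Pr_succ_next_law //.
under [RHS]eq_bigr do rewrite PrE big_distrr /=.
rewrite [RHS]exchange_big /=; apply: eq_bigr => w _.
have [->|prob_w] := eqVneq (prob w) 0.
  by rewrite !mul0r big1 // => m _; rewrite mul0r mulr0.
rewrite next_law_T // (bigD1 (mt w j)) //= eqxx big1 ?addr0 /=; first by rewrite mulrC.
by move=> m /negPf; rewrite eq_sym => ->; rewrite /= mulr0n !mulr0.
Qed.

Lemma Pr_blank (j : 'I_N) (A : pred O) (b : bool) :
  (forall w c, A (upd_coin w j c) = A w) ->
  Pr [pred w | A w && ~~ (b && w.2 j)] = (if b then 1 - q else 1) * Pr A.
Proof.
case: b => A_coin /=; last by rewrite mul1r; apply: eq_Pr => w /=; rewrite andbT.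
rewrite !PrE (eq_bigr (fun w => prob w * (A w)%:R * (~~ w.2 j)%:R)); last first.
  by move=> w _; rewrite /= -mulrA -natrM mulnb.
under eq_bigr do rewrite -mulrA.
rewrite (sum_prob_coin (G := fun w c => (A w)%:R * (~~ c)%:R)); last first.
  by move=> w c x; rewrite A_coin.
by rewrite big_distrr; apply: eq_bigr => w _ /=; rewrite big_bool /=; ring.
Qed.

Lemma Pr_mt_determined i (A : pred O) x m : (forall w, A w -> mt w i = x) ->
  Pr [pred w | (mt w i == m) && A w] = (m == x)%:R * Pr A.
Proof.
move=> mt_A; have [->|neq_mx] := eqVneq m x.
  by rewrite mul1r; apply: eq_Pr => w /=; case Aw: (A w); rewrite ?andbF ?mt_A ?eqxx.
rewrite mul0r /Defs.Pr big_pred0 // => w /=.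
by case Aw: (A w); rewrite ?andbF // mt_A // eq_sym (negbTE neq_mx).
Qed.

Definition Tpow_belief i (w0 : O) := forall m,
  Pr [pred w | (mt w i == m) && (hist w i == hist w0 i)]
  = Tpow T (xy_at w0 i).2 m (xy_at w0 i).1 * Pr [pred w | hist w i == hist w0 i].

Lemma Tpow_belief_succ (j : 'I_N) w0 : Tpow_belief j w0 -> Tpow_belief j.+1 w0.
Proof.
move=> IH m; rewrite xy_at_succ.
case obs_j: (obs w0 j) => [x|]; rewrite [xy_step _ _]/=.
  rewrite (Pr_mt_determined (A := fun w => hist w j.+1 == hist w0 j.+1) (x := x)) // => w.
  by rewrite eq_hist_succ obs_j /obs => /andP [_]; case: ifP => // _ /eqP [].
set a := act_at w0 j.
have hist_succ_blank w :
    (hist w j.+1 == hist w0 j.+1) = (hist w j == hist w0 j) && ~~ (a && w.2 j).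
  rewrite eq_hist_succ obs_j; have [Ew|] //= := eqVneq (hist w j) (hist w0 j).
  by rewrite /obs /a /Defs.act_at Ew coin_ord; case: (_ && _).
rewrite (eq_Pr (B := [pred w | [pred w | (mt w j.+1 == m) && (hist w j == hist w0 j)] w
                               && ~~ (a && w.2 j)])); last first.
  by move=> w /=; rewrite hist_succ_blank andbA.
rewrite (eq_Pr (A := [pred w | hist w j.+1 == hist w0 j.+1])
        (B := [pred w | [pred w | hist w j == hist w0 j] w && ~~ (a && w.2 j)])); last first.
  by move=> w /=; rewrite hist_succ_blank.
rewrite !Pr_blank => [|w c|w c]; last 2 first.
- by rewrite /= hist_upd_coin.
- by rewrite /= /Defs.mt st_upd_coin hist_upd_coin.
rewrite Pr_mt_succ => [|w v]; last by rewrite /= hist_upd_noise.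
under eq_bigr do rewrite IH.
by rewrite TpowS mulr_sumr mulr_suml; apply: eq_bigr => m' _; ring.
Qed.

Lemma Pr_mt_hist i w0 : (i <= N)%N -> Tpow_belief i w0.
Proof.
elim: i => [|i IH] le_iN; last exact: (Tpow_belief_succ (j := Ordinal le_iN) (IH (ltnW le_iN))).
move=> m; rewrite (Pr_mt_determined (A := fun w => hist w 0 == hist w0 0) (x := mt w0 0)) //.
by move=> w /eqP /mt0_hist.
Qed.

Lemma belief_Tpow k w0 : (k <= N)%N -> Pr [pred w | hist w k == hist w0 k] != 0 ->
  belief f P0 Pw q g w0 k = [ffun m => Tpow T (xy_at w0 k).2 m (xy_at w0 k).1].
Proof. by move=> le_kN Pr_hist; apply/ffunP => m; rewrite !ffunE Pr_mt_hist // mulfK. Qed.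

Lemma CE_cost_hist (h : {ffun Mn S n -> R} -> Mn S n) (c : Mn S n -> Mn S n -> bool -> R) k w0 :
  (k <= N)%N -> Pr [pred w | hist w k == hist w0 k] != 0 ->
  CE P0 Pw q (fun w => c (mt w k) (mhat f P0 Pw q g h w k) (act_at w k))
     [pred w | hist w k == hist w0 k]
  = chat c h T (xy_at w0 k).1 (xy_at w0 k).2 (act_at w0 k).
Proof.
move=> le_kN Pr_hist; rewrite /CE /chat.
set x := (xy_at w0 k).1; set y := (xy_at w0 k).2; set a := act_at w0 k.
pose F m := c m (h [ffun m' => Tpow T y m' x]) a.
transitivity ((\sum_(w | hist w k == hist w0 k) prob w * F (mt w k))
              / Pr [pred w | hist w k == hist w0 k]).
  congr (_ / _); apply: eq_bigr => w /eqP Ew.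
  have belief_w : belief f P0 Pw q g w k = belief f P0 Pw q g w0 k by rewrite /Defs.belief Ew.
  by rewrite /Defs.mhat belief_w belief_Tpow // /F /a /Defs.act_at Ew.
rewrite (partition_big (fun w => mt w k) xpredT) //= mulr_suml; apply: eq_bigr => m _.
transitivity (F m * Pr [pred w | (mt w k == m) && (hist w k == hist w0 k)]
              / Pr [pred w | hist w k == hist w0 k]).
  congr (_ / _); rewrite /Defs.Pr mulr_sumr.
  by apply: eq_big => [w | w /andP [_ /eqP ->]]; [rewrite andbC | rewrite mulrC].
by rewrite Pr_mt_hist // mulrA mulfK.
Qed.

End Model.

Theorem lemma3 (R : realFieldType) (S W : finType) (n : nat)
  (f : S -> Mn S n -> W -> S)
  (P0 : {ffun 'I_n -> S} -> R) (Pw : {ffun 'I_n -> W} -> R) (q : R)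
  (T : Mn S n -> Mn S n -> R)
  (h : {ffun Mn S n -> R} -> Mn S n)
  (c : Mn S n -> Mn S n -> bool -> R) :
  (0 < n)%N ->
  (forall s, 0 <= P0 s) -> \sum_s P0 s = 1 ->
  (forall w, 0 <= Pw w) -> \sum_w Pw w = 1 ->
  (* exchangeability of the local noises w_t^1, ..., w_t^n *)
  (forall (sigma : 'S_n) (w : {ffun 'I_n -> W}), Pw [ffun i => w (sigma i)] = Pw w) ->
  0 <= q <= 1 ->
  (forall m m' a, 0 <= c m m' a) ->
  (* T is the transition matrix of the Markov chain m_t: T(m',m) = P(m_{k+1} = m' | m_k = m) *)
  (forall (N k : nat) (m m' : Mn S n), (k < N)%N ->
     Pr P0 Pw q [pred w : Omega S W n N | (mt f w k.+1 == m') && (mt f w k == m)]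
     = T m' m * Pr P0 Pw q [pred w : Omega S W n N | mt f w k == m]) ->
  forall (g : nat -> seq (option (Mn S n)) -> seq bool -> bool)
         (N k : nat) (w0 : Omega S W n N), (k <= N)%N ->
  let E := [pred w : Omega S W n N |
              [&& xseq f g w k == xseq f g w0 k,
                  yseq f g w k == yseq f g w0 k &
                  aseq f g w k == aseq f g w0 k]] in
  0 < Pr P0 Pw q E ->
  CE P0 Pw q (fun w => c (mt f w k) (mhat f P0 Pw q g h w k) (act_at f g w k)) E
  = chat c h T (xy_at f g w0 k).1 (xy_at f g w0 k).2 (act_at f g w0 k).
Proof.
move=> _ P0_ge0 _ Pw_ge0 Pw_sum1 Pw_exch q01 _ T_trans g N k w0 le_kN E Pr_E_gt0.
have E_hist : E =1 [pred w | hist f g w k == hist f g w0 k] := fun w => event_hist f g w w0 k.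
rewrite (eq_CE _ _ _ _ E_hist).
apply: (CE_cost_hist P0_ge0 Pw_ge0 Pw_sum1 Pw_exch q01 (T_trans N)) => //.
by rewrite -(eq_Pr _ _ _ E_hist) lt0r_neq0.
Qed.
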